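(* For every $1<p<\infty$ there exists an Orlicz function $\Phi_p$ on $[0,\infty)$ such that $C_{\Phi_p}^\infty\cong\{t^p\}$ and $E_{\Phi_p}^\infty\not\equiv\{t^p\}$.
   Context: An Orlicz function is an increasing convex function $F$ on $[0,\infty)$ with $F(0)=0$ and $\lim_{t\to\infty}F(t)=\infty$. For an Orlicz function $F$ and $A>0$, let $E_{F,A}^\infty$ be the closure in $C[0,1]$ of the set of functions $\{x\mapsto F(xy)/F(y):\ y>A\}$ (on $[0,1]$); set $E_F^\infty:=\bigcap_{A>0}E_{F,A}^\infty$ and $C_F^\infty:=\overline{\mathrm{conv}\,E_F^\infty}$ (closure in $C[0,1]$ of the convex hull). For a set $S$ of functions on $[0,1]$ and a function $\varphi$ on $[0,1]$, write $S\cong\{\varphi\}$ if for every $H\in S$ there is $C=C(H)>0$ with $C^{-1}\varphi(t)\le H(t)\le C\varphi(t)$ for all $0<t\le 1$; write $S\equiv\{\varphi\}$ if one constant $C$ works for all $H\in S$. *)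

From Stdlib Require Import Reals List.
Import ListNotations.
Open Scope R_scope.

(* Orlicz function: increasing (strictly) convex function on [0,oo),
   F(0)=0, F(t) -> oo.  Values of F on negative reals are irrelevant. *)
Definition Orlicz (F : R -> R) : Prop :=
  F 0 = 0 /\
  (forall s t, 0 <= s -> s < t -> F s < F t) /\
  (forall s t l, 0 <= s -> 0 <= t -> 0 <= l <= 1 ->
     F (l * s + (1 - l) * t) <= l * F s + (1 - l) * F t) /\
  (forall M, exists T, forall t, T <= t -> M <= F t).

(* Sets of functions on [0,1], represented as predicates on R -> R
   (values outside [0,1] are irrelevant). *)
Definition fset := (R -> R) -> Prop.

Definition cont01 (H : R -> R) : Prop :=
  forall x, 0 <= x <= 1 -> forall eps, 0 < eps -> exists delta, 0 < delta /\
    forall y, 0 <= y <= 1 -> Rabs (y - x) < delta -> Rabs (H y - H x) < eps.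

Definition closureC01 (S : fset) : fset := fun H =>
  cont01 H /\
  forall eps, 0 < eps -> exists g, S g /\
    forall x, 0 <= x <= 1 -> Rabs (H x - g x) <= eps.

Definition conv_hull (S : fset) : fset := fun H =>
  exists l : list (R * (R -> R)),
    Forall (fun c => 0 <= fst c /\ S (snd c)) l /\
    fold_right (fun c acc => fst c + acc) 0 l = 1 /\
    forall x, H x = fold_right (fun c acc => fst c * snd c x + acc) 0 l.

Definition E_FA (F : R -> R) (A : R) : fset :=
  closureC01 (fun g => exists y, A < y /\ g = (fun x => F (x * y) / F y)).

Definition E_F (F : R -> R) : fset := fun H => forall A, 0 < A -> E_FA F A H.

Definition C_F (F : R -> R) : fset := closureC01 (conv_hull (E_F F)).

Definition fcong (S : fset) (phi : R -> R) : Prop :=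
  forall H, S H -> exists C, 0 < C /\
    forall t, 0 < t <= 1 -> / C * phi t <= H t /\ H t <= C * phi t.

Definition fequiv (S : fset) (phi : R -> R) : Prop :=
  exists C, 0 < C /\ forall H, S H ->
    forall t, 0 < t <= 1 -> / C * phi t <= H t /\ H t <= C * phi t.

From Stdlib Require Import Reals Lra Lia Psatz List Classical ZArith.
Open Scope R_scope.

(* Let knots 0 = knot 0 < knot 1 < ... with segment lengths
   knot (S j) - knot j = j + 1, and let M be the continuous convex broken line
   with M = 1 on (-oo, 0] and slope [slope j] on [knot j, knot (S j)], where
   [slope (S j) = (j + 2) * slope j].  The Orlicz function is
   Phi(t) = t^p M(p ln t) = G(t^p) with G(u) = u M(ln u); it is convex because
   G is a maximum of convex functions u (a + ln u) (supporting lines compose).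

   If p ln y lies on segment [S j] at distance D from its left
   knot, then x |-> Phi(x y)/Phi(y) is within 1/(j + 2) of the model function
   H_D(t) = t^p max(1/(1+D), 1 + p ln t/(1+D)).  Hence every H_n (n : nat) lies
   in E_Phi, and H_n(e^{-n/p}) = t^p/(n+1), so E_Phi is not uniformly
   equivalent to t^p.  Conversely every element of E_Phi, and so every element
   of C_Phi, is a uniform limit of convex combinations of models; these lie
   below t^p and, for any threshold D0, above (mass on D <= D0) t^p/(1+D0) and
   above (remaining mass) t^p (1 + p ln t/(1+D0)).  A classical case split on
   whether some threshold carries half the mass along approximations gives
   t^p/C <= H <= t^p for each H in C_Phi. *)

(* Knots and slopes of the broken line [M]; [line j] extends its piece on
   segment j to all of R. *)
Fixpoint knot (j : nat) : R :=
  match j with O => 0 | S k => knot k + INR k + 1 end.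

Fixpoint slope (j : nat) : R :=
  match j with O => 1 | S k => slope k * (INR k + 2) end.

Definition line (j : nat) (s : R) : R := slope j * (1 + s - knot j).

Fixpoint Mupto (N : nat) (s : R) : R :=
  match N with
  | O => Rmax 1 (line 0 s)
  | S k => Rmax (Mupto k s) (line (S k) s)
  end.

(* [M s = max (1, sup_j line j s)]; lines with index above [up s] are negative at [s]. *)
Definition M (s : R) : R := Mupto (Z.to_nat (up s)) s.

Lemma slope_ge1 : forall j, 1 <= slope j.
Proof. induction j as [|j IH]; simpl; [lra|]. pose proof (pos_INR j). nra. Qed.

Lemma knot_ge_index : forall j, INR j <= knot j.
Proof.
  induction j as [|j IH]; [simpl; lra|].
  change (knot (S j)) with (knot j + INR j + 1). rewrite S_INR. pose proof (pos_INR j). lra.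
Qed.

Lemma knot_mono : forall i j, (i <= j)%nat -> knot i <= knot j.
Proof. intros i j Hij; induction Hij; simpl; [lra|]. pose proof (pos_INR m). lra. Qed.

Lemma line_step : forall k s,
  line (S k) s - line k s = slope k * (INR k + 1) * (s - knot (S k)).
Proof. intros k s. unfold line. simpl. ring. Qed.

Lemma line_increasing : forall j s s', s <= s' -> line j s <= line j s'.
Proof. intros j s s' H. unfold line. pose proof (slope_ge1 j). nra. Qed.

Lemma Mupto_ge1 : forall N s, 1 <= Mupto N s.
Proof.
  induction N as [|N IH]; intro s; simpl; [apply Rmax_l|].
  eapply Rle_trans; [apply IH|apply Rmax_l].
Qed.

Lemma Mupto_ge_line : forall N j s, (j <= N)%nat -> line j s <= Mupto N s.
Proof.
  induction N as [|N IH]; intros j s Hj; simpl.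
  - replace j with 0%nat by lia. apply Rmax_r.
  - destruct (Nat.eq_dec j (S N)) as [->|Hne]; [apply Rmax_r|].
    eapply Rle_trans; [apply IH; lia|apply Rmax_l].
Qed.

Lemma Mupto_attained : forall N s, Mupto N s = 1 \/ exists j, Mupto N s = line j s.
Proof.
  induction N as [|N IH]; intro s; simpl.
  - unfold Rmax; destruct Rle_dec; eauto.
  - unfold Rmax; destruct Rle_dec; eauto.
Qed.

Lemma Mupto_le : forall N s v,
  1 <= v -> (forall j, (j <= N)%nat -> line j s <= v) -> Mupto N s <= v.
Proof. induction N as [|N IH]; intros s v H1 H; simpl; apply Rmax_lub; auto. Qed.

Lemma line_negative_beyond : forall j s, (Z.to_nat (up s) < j)%nat -> line j s < 0.
Proof.
  intros j s Hj. unfold line.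
  assert (Hup : IZR (up s) <= INR (Z.to_nat (up s))).
  { destruct (Z_le_gt_dec 0 (up s)).
    - rewrite INR_IZR_INZ, Z2Nat.id by lia. lra.
    - replace (Z.to_nat (up s)) with 0%nat by lia. simpl. apply IZR_le. lia. }
  pose proof (archimed s) as [Hs _].
  apply le_INR in Hj. rewrite S_INR in Hj.
  pose proof (knot_ge_index j). pose proof (slope_ge1 j). nra.
Qed.

Lemma M_ge1 : forall s, 1 <= M s.
Proof. intro s. apply Mupto_ge1. Qed.

Lemma M_ge_line : forall j s, line j s <= M s.
Proof.
  intros j s. unfold M.
  destruct (le_lt_dec j (Z.to_nat (up s))) as [Hj|Hj].
  - now apply Mupto_ge_line.
  - pose proof (line_negative_beyond j s Hj). pose proof (M_ge1 s). unfold M in *. lra.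
Qed.

Lemma M_attained : forall s, M s = 1 \/ exists j, M s = line j s.
Proof. intro s. apply Mupto_attained. Qed.

(* [M] is nondecreasing: it is a maximum of nondecreasing functions. *)
Lemma M_mono : forall s s', s <= s' -> M s <= M s'.
Proof.
  intros s s' H. destruct (M_attained s) as [->|[j ->]]; [apply M_ge1|].
  eapply Rle_trans; [apply line_increasing, H|apply M_ge_line].
Qed.

Lemma line_step_sign : forall k s,
  (knot (S k) <= s -> line k s <= line (S k) s) /\
  (s <= knot (S k) -> line (S k) s <= line k s).
Proof.
  intros k s. pose proof (line_step k s).
  assert (0 <= slope k * (INR k + 1)) by (pose proof (slope_ge1 k); pose proof (pos_INR k); nra).
  split; intro; nra.
Qed.

Lemma line_le_before : forall j k s, (k <= j)%nat -> knot j <= s -> line k s <= line j s.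
Proof.
  induction j as [|j IH]; intros k s Hk Hs.
  - replace k with 0%nat by lia. lra.
  - destruct (Nat.eq_dec k (S j)) as [->|Hne]; [lra|].
    assert (knot j <= knot (S j)) by (apply knot_mono; lia).
    pose proof (IH k s ltac:(lia) ltac:(lra)).
    pose proof (proj1 (line_step_sign j s) Hs). lra.
Qed.

Lemma line_le_after : forall j i s, s <= knot (S j) -> line (j + i) s <= line j s.
Proof.
  intros j i s Hs. induction i as [|i IH]; [rewrite Nat.add_0_r; lra|].
  replace (j + S i)%nat with (S (j + i)) by lia.
  assert (knot (S j) <= knot (S (j + i))) by (apply knot_mono; lia).
  pose proof (proj2 (line_step_sign (j + i) s) ltac:(lra)). lra.
Qed.

Lemma line_dominant_on_segment : forall j k s,
  knot j <= s <= knot (S j) -> line k s <= line j s.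
Proof.
  intros j k s [Hlo Hhi]. destruct (le_lt_dec k j) as [Hkj|Hjk].
  - now apply line_le_before.
  - replace k with (j + (k - j))%nat by lia. now apply line_le_after.
Qed.

Lemma M_on_segment : forall j s, knot j <= s <= knot (S j) -> M s = line j s.
Proof.
  intros j s Hs. apply Rle_antisym; [|apply M_ge_line].
  unfold M. apply Mupto_le.
  - unfold line. pose proof (slope_ge1 j). nra.
  - intros k _. now apply line_dominant_on_segment.
Qed.

Lemma segment_beyond : forall J s, knot (S J) <= s ->
  exists j, (J <= j)%nat /\ knot (S j) <= s <= knot (S (S j)).
Proof.
  intros J s Hs.
  assert (Hfind : forall n, s < knot (S n) -> exists j, (J <= j)%nat /\ knot (S j) <= s <= knot (S (S j))).
  { induction n as [|n IH]; intro Hn.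
    - assert (knot 1 <= knot (S J)) by (apply knot_mono; lia). lra.
    - destruct (Rle_dec (knot (S n)) s) as [Hle|Hgt].
      + exists n. split; [|lra].
        destruct (le_lt_dec J n) as [|Hlt]; [assumption|].
        assert (knot (S (S n)) <= knot (S J)) by (apply knot_mono; lia). lra.
      + apply IH. lra. }
  destruct (INR_unbounded s) as [N HN]. apply (Hfind N).
  pose proof (knot_ge_index (S N)). rewrite S_INR in *. lra.
Qed.

Definition convex_nonneg (F : R -> R) : Prop :=
  forall s t l, 0 <= s -> 0 <= t -> 0 <= l <= 1 ->
    F (l * s + (1 - l) * t) <= l * F s + (1 - l) * F t.

Definition supports (F : R -> R) (z k : R) : Prop :=
  forall t, 0 <= t -> F z + k * (t - z) <= F t.

Lemma convex_of_supports : forall F,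
  F 0 = 0 -> (forall t, 0 <= t -> 0 <= F t) ->
  (forall z, 0 < z -> exists k, supports F z k) -> convex_nonneg F.
Proof.
  intros F F0 Fnn Fsupp s t l Hs Ht Hl.
  set (z := l * s + (1 - l) * t).
  assert (Hz : 0 <= z) by (unfold z; nra).
  destruct (Req_dec z 0) as [Hz0|Hz0].
  - rewrite Hz0, F0. pose proof (Fnn s Hs). pose proof (Fnn t Ht). nra.
  - destruct (Fsupp z ltac:(lra)) as [k Hk].
    pose proof (Hk s Hs) as Hks. pose proof (Hk t Ht) as Hkt.
    assert (l * (F z + k * (s - z)) <= l * F s) by (apply Rmult_le_compat_l; lra).
    assert ((1 - l) * (F z + k * (t - z)) <= (1 - l) * F t) by (apply Rmult_le_compat_l; lra).
    assert (l * (F z + k * (s - z)) + (1 - l) * (F z + k * (t - z)) = F z) by (unfold z; ring).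
    lra.
Qed.

Lemma supports_comp : forall (G f : R -> R) z kG kf,
  0 <= kG -> (forall t, 0 <= t -> 0 <= f t) ->
  supports G (f z) kG -> supports f z kf -> supports (fun t => G (f t)) z (kG * kf).
Proof.
  intros G f z kG kf HkG Hf HG Hfz t Ht.
  pose proof (HG (f t) (Hf t Ht)). pose proof (Hfz t Ht).
  assert (kG * (kf * (t - z)) <= kG * (f t - f z)) by (apply Rmult_le_compat_l; lra).
  lra.
Qed.

Lemma strictly_increasing_of_convex : forall F,
  convex_nonneg F -> F 0 = 0 -> (forall t, 0 < t -> 0 < F t) ->
  forall s t, 0 <= s -> s < t -> F s < F t.
Proof.
  intros F Fconv F0 Fpos s t Hs Hst.
  pose proof (Fpos t ltac:(lra)) as Ft.
  destruct (Req_dec s 0) as [->|Hs0]; [lra|].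
  assert (Hl : 0 < s / t < 1).
  { split; [apply Rdiv_lt_0_compat; lra|].
    apply Rmult_lt_reg_r with t; [lra|]. field_simplify; lra. }
  pose proof (Fconv t 0 (s / t) ltac:(lra) ltac:(lra) ltac:(lra)) as Hc.
  replace (s / t * t + (1 - s / t) * 0) with s in Hc by (field; lra).
  rewrite F0 in Hc. nra.
Qed.

(* The power function t^p, set to 0 on (-oo, 0] (Stdlib's [Rpower 0 p] is 1). *)
Definition pw (p t : R) : R := if Rle_dec t 0 then 0 else Rpower t p.

Lemma exp_bernoulli : forall p a, 1 <= p -> 1 + p * (exp a - 1) <= exp (p * a).
Proof.
  intros p a Hp.
  assert (E1 : exp (p * a) = exp a * exp ((p - 1) * a))
    by (rewrite <- exp_plus; f_equal; ring).
  assert (E2 : exp a * exp (- a) = 1)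
    by (rewrite <- exp_plus, Rplus_opp_r; apply exp_0).
  pose proof (exp_ineq1_le ((p - 1) * a)). pose proof (exp_ineq1_le (- a)).
  pose proof (exp_pos a).
  assert (exp a * (1 + (p - 1) * a) <= exp (p * a))
    by (rewrite E1; apply Rmult_le_compat_l; lra).
  assert ((p - 1) * (exp a * (1 - a)) <= (p - 1) * (exp a * exp (- a)))
    by (apply Rmult_le_compat_l; [lra|apply Rmult_le_compat_l; lra]).
  nra.
Qed.

Lemma pw_supports : forall p z, 1 <= p -> 0 < z -> supports (pw p) z (p * Rpower z p / z).
Proof.
  intros p z Hp Hz t Ht. unfold pw.
  destruct (Rle_dec z 0) as [|_]; [lra|].
  pose proof (exp_pos (p * ln z)) as Hzp. change (exp (p * ln z)) with (Rpower z p) in Hzp.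
  destruct (Rle_dec t 0) as [Ht0|Ht0].
  - replace t with 0 by lra.
    replace (Rpower z p + p * Rpower z p / z * (0 - z)) with (Rpower z p * (1 - p)) by (field; lra).
    nra.
  - pose proof (exp_bernoulli p (ln t - ln z) Hp) as B.
    assert (Et : exp (ln t - ln z) = t / z).
    { unfold Rminus. rewrite exp_plus, exp_Ropp, !exp_ln by lra. reflexivity. }
    assert (Ep : Rpower t p = exp (p * (ln t - ln z)) * Rpower z p).
    { unfold Rpower. rewrite <- exp_plus. f_equal. ring. }
    rewrite Et in B. rewrite Ep.
    replace (Rpower z p + p * Rpower z p / z * (t - z))
      with ((1 + p * (t / z - 1)) * Rpower z p) by (field; lra).
    apply Rmult_le_compat_r; lra.
Qed.

Definition G (u : R) : R := u * M (ln u).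

Definition Phi (p t : R) : R := G (pw p t).

Lemma xlnx_tangent : forall a u u0, 0 < u -> 0 < u0 ->
  u0 * (a + ln u0) + (a + 1 + ln u0) * (u - u0) <= u * (a + ln u).
Proof.
  intros a u u0 Hu Hu0.
  pose proof (exp_ineq1_le (ln u0 - ln u)) as Hexp.
  unfold Rminus in Hexp. rewrite exp_plus, exp_Ropp, !exp_ln in Hexp by lra.
  assert (u * (1 + (ln u0 + - ln u)) <= u * (u0 * / u)) by (apply Rmult_le_compat_l; lra).
  replace (u * (u0 * / u)) with u0 in * by (field; lra).
  nra.
Qed.

(* [G] has a supporting line of nonnegative slope at every [u0 > 0]: that of
   the constant piece [u] or of the active piece [u * line j (ln u)]. *)
Lemma G_supports : forall u0, 0 < u0 -> exists k, 0 <= k /\ supports G u0 k.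
Proof.
  intros u0 Hu0. unfold supports, G.
  destruct (M_attained (ln u0)) as [HM|[j HM]].
  - exists 1. split; [lra|]. intros u Hu. rewrite HM.
    destruct (Req_dec u 0) as [->|Hu0']; [lra|].
    pose proof (M_ge1 (ln u)). nra.
  - set (L := slope j). set (a := 1 - knot j).
    assert (HMu0 : M (ln u0) = L * (a + ln u0)) by (rewrite HM; unfold line, L, a; ring).
    assert (HL : 1 <= L) by apply slope_ge1.
    assert (Ha : 0 < a + ln u0) by (pose proof (M_ge1 (ln u0)); nra).
    exists (L * (a + 1 + ln u0)). split; [nra|].
    intros u Hu. rewrite HMu0.
    destruct (Req_dec u 0) as [->|Hu0'].
    + rewrite Rmult_0_l. nra.
    + pose proof (M_ge_line j (ln u)) as HMu.
      replace (line j (ln u)) with (L * (a + ln u)) in HMu by (unfold line, L, a; ring).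
      pose proof (xlnx_tangent a u u0 ltac:(lra) Hu0).
      assert (L * (u0 * (a + ln u0) + (a + 1 + ln u0) * (u - u0)) <= L * (u * (a + ln u)))
        by (apply Rmult_le_compat_l; lra).
      assert (u * (L * (a + ln u)) <= u * M (ln u)) by (apply Rmult_le_compat_l; lra).
      nra.
Qed.

Lemma Phi_zero : forall p, Phi p 0 = 0.
Proof.
  intro p. unfold Phi, G, pw. destruct (Rle_dec 0 0) as [_|]; [ring|lra].
Qed.

Lemma Phi_pos_eq : forall p t, 0 < t -> Phi p t = Rpower t p * M (p * ln t).
Proof.
  intros p t Ht. unfold Phi, G, pw.
  destruct (Rle_dec t 0) as [|_]; [lra|]. now rewrite ln_Rpower.
Qed.

Lemma power_le_Phi : forall p t, 0 < t -> Rpower t p <= Phi p t.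
Proof.
  intros p t Ht. rewrite Phi_pos_eq by lra.
  pose proof (M_ge1 (p * ln t)). pose proof (exp_pos (p * ln t)). unfold Rpower in *. nra.
Qed.

(* Convexity via composition of supporting lines, strict monotonicity from
   convexity, and growth from [Phi p t >= t^p >= t] for [t >= 1]. *)
Lemma Phi_orlicz : forall p, 1 < p -> Orlicz (Phi p).
Proof.
  intros p Hp.
  assert (Hpos : forall t, 0 < t -> 0 < Phi p t)
    by (intros t Ht; pose proof (power_le_Phi p t Ht); pose proof (exp_pos (p * ln t)); unfold Rpower in *; lra).
  assert (Hconv : convex_nonneg (Phi p)).
  { apply convex_of_supports; [apply Phi_zero| |].
    - intros t Ht. destruct (Req_dec t 0) as [->|]; [rewrite Phi_zero; lra|]. left; apply Hpos; lra.
    - intros z Hz.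
      assert (Hpz : pw p z = Rpower z p) by (unfold pw; destruct (Rle_dec z 0); lra).
      destruct (G_supports (pw p z)) as [kG [HkG HG]]; [rewrite Hpz; apply exp_pos|].
      exists (kG * (p * Rpower z p / z)).
      apply (supports_comp G (pw p)); [assumption| |assumption|apply pw_supports; lra].
      intros t _. unfold pw. destruct (Rle_dec t 0); [lra|left; apply exp_pos]. }
  split; [apply Phi_zero|split; [|split]].
  - apply strictly_increasing_of_convex; [assumption|apply Phi_zero|assumption].
  - exact Hconv.
  - intro B. exists (Rmax B 1). intros t Ht.
    pose proof (Rmax_l B 1). pose proof (Rmax_r B 1).
    pose proof (power_le_Phi p t ltac:(lra)).
    pose proof (Rle_Rpower t 1 p ltac:(lra) ltac:(lra)). rewrite Rpower_1 in * by lra. lra.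
Qed.

Lemma le_div_iff : forall a b c, 0 < c -> (a <= b / c <-> a * c <= b).
Proof.
  intros a b c Hc. split; intro H.
  - apply Rmult_le_compat_r with (r := c) in H; [|lra].
    unfold Rdiv in H. rewrite Rmult_assoc, Rinv_l, Rmult_1_r in H by lra. exact H.
  - apply Rmult_le_reg_r with c; [lra|]. unfold Rdiv. rewrite Rmult_assoc, Rinv_l by lra. lra.
Qed.

Lemma div_le_iff : forall a b c, 0 < c -> (b / c <= a <-> b <= a * c).
Proof.
  intros a b c Hc. split; intro H.
  - apply Rmult_le_compat_r with (r := c) in H; [|lra].
    unfold Rdiv in H. rewrite Rmult_assoc, Rinv_l, Rmult_1_r in H by lra. exact H.
  - apply Rmult_le_reg_r with c; [lra|]. unfold Rdiv. rewrite Rmult_assoc, Rinv_l by lra. lra.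
Qed.

(* The model profile: the limit shape of [M (s + w) / M s] for [w <= 0], when
   [s] sits at distance [D] past a knot. *)
Definition rho (D w : R) : R := Rmax (/ (1 + D)) (1 + w / (1 + D)).

Lemma M_on_segment_S : forall j s, knot (S j) <= s <= knot (S (S j)) ->
  M s = slope j * (INR j + 2) * (1 + (s - knot (S j))).
Proof. intros j s Hs. rewrite (M_on_segment (S j) s Hs). unfold line. simpl. ring. Qed.

Lemma M_ratio_lower : forall j s w,
  knot (S j) <= s <= knot (S (S j)) -> w <= 0 ->
  rho (s - knot (S j)) w + w / (INR j + 2) <= M (s + w) / M s.
Proof.
  intros j s w Hs Hw. set (d := s - knot (S j)). set (c := INR j + 2). set (L := slope j).
  assert (HMs : M s = L * c * (1 + d)) by apply (M_on_segment_S j s Hs).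
  assert (Hd : 0 <= d) by (unfold d; lra).
  assert (HL : 1 <= L) by apply slope_ge1.
  assert (Hc : 2 <= c) by (unfold c; pose proof (pos_INR j); lra).
  assert (Hpos : 0 < L * c * (1 + d)) by (apply Rmult_lt_0_compat; nra).
  (* the two lines through the relevant knot bound [M (s + w)] from below *)
  pose proof (M_ge_line (S j) (s + w)) as H1.
  replace (line (S j) (s + w)) with (L * c * (1 + d + w)) in H1
    by (unfold line, L, c, d; simpl; ring).
  pose proof (M_ge_line j (s + w)) as H2.
  replace (line j (s + w)) with (L * (c + d + w)) in H2
    by (unfold line, L, c, d; simpl; ring).
  rewrite HMs. apply le_div_iff; [exact Hpos|].
  assert (Hwc : w / c <= 0) by (unfold Rdiv; pose proof (Rinv_0_lt_compat c ltac:(lra)); nra).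
  unfold rho. fold d. apply Rmax_case_strong; intros _.
  - replace ((/ (1 + d) + w / c) * (L * c * (1 + d))) with (L * (c + w * (1 + d))) by (field; lra).
    assert (0 <= L * (d * (1 - w))) by (apply Rmult_le_pos; [lra|apply Rmult_le_pos; lra]).
    nra.
  - replace ((1 + w / (1 + d) + w / c) * (L * c * (1 + d)))
      with (L * c * (1 + d + w) + (w / c) * (L * c * (1 + d))) by (field; lra).
    assert ((w / c) * (L * c * (1 + d)) <= 0) by (pose proof (Rmult_le_compat_r (L * c * (1 + d)) (w / c) 0 ltac:(lra) Hwc); lra).
    lra.
Qed.

Lemma M_ratio_upper : forall j s w,
  knot (S j) <= s <= knot (S (S j)) -> w <= 0 ->
  M (s + w) / M s <= rho (s - knot (S j)) w.
Proof.
  intros j s w Hs Hw. set (d := s - knot (S j)). set (K := slope j * (INR j + 2)).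
  assert (HMs : M s = K * (1 + d)) by apply (M_on_segment_S j s Hs).
  assert (Hd : 0 <= d) by (unfold d; lra).
  assert (HK : 0 < K) by (unfold K; pose proof (slope_ge1 j); pose proof (pos_INR j); nra).
  rewrite HMs. apply div_le_iff; [nra|]. unfold rho. fold d.
  destruct (Rle_dec (knot (S j)) (s + w)) as [Hin|Hout].
  - (* [s + w] is still on segment [S j], where [M] is exactly linear *)
    rewrite (M_on_segment_S j (s + w)) by lra. fold K.
    apply Rle_trans with ((1 + w / (1 + d)) * (K * (1 + d))); [|apply Rmult_le_compat_r; [nra|apply Rmax_r]].
    replace ((1 + w / (1 + d)) * (K * (1 + d))) with (K * (1 + (s + w - knot (S j))))
      by (unfold d; field; lra). lra.
  - (* left of the knot, [M] is at most its value [K] at the knot *)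
    pose proof (M_mono (s + w) (knot (S j)) ltac:(lra)) as Hmono.
    rewrite (M_on_segment_S j (knot (S j))) in Hmono by (split; [lra|apply knot_mono; lia]).
    fold K in Hmono.
    apply Rle_trans with (/ (1 + d) * (K * (1 + d))); [|apply Rmult_le_compat_r; [nra|apply Rmax_l]].
    replace (/ (1 + d) * (K * (1 + d))) with K by (field; lra). lra.
Qed.

(* The model functions [H_D(t) = t^p rho_D(p ln t)], [D >= 0]: they are the
   functions of which [E_F] is made up (up to uniform limits). *)
Definition model (p D t : R) : R :=
  if Rle_dec t 0 then 0 else Rpower t p * rho D (p * ln t).

Lemma ln_nonpos : forall t, 0 < t <= 1 -> ln t <= 0.
Proof.
  intros t [Ht0 Ht1]. destruct (Req_dec t 1) as [->|Hne]; [rewrite ln_1; lra|].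
  pose proof (ln_increasing t 1 Ht0 ltac:(lra)). rewrite ln_1 in *. lra.
Qed.

Lemma neg_mul_exp_le1 : forall w, - w * exp w <= 1.
Proof.
  intro w. pose proof (exp_ineq1_le (- w)). pose proof (exp_pos w).
  assert (exp w * exp (- w) = 1) by (rewrite <- exp_plus, Rplus_opp_r; apply exp_0).
  destruct (Rle_dec 0 w); nra.
Qed.

Lemma dilation_near_model : forall p j y, 0 < p -> 0 < y ->
  knot (S j) <= p * ln y <= knot (S (S j)) ->
  forall x, 0 <= x <= 1 ->
  Rabs (Phi p (x * y) / Phi p y - model p (p * ln y - knot (S j)) x) <= / (INR j + 2).
Proof.
  intros p j y Hp Hy Hseg x Hx.
  assert (Hc : 0 < / (INR j + 2)) by (apply Rinv_0_lt_compat; pose proof (pos_INR j); lra).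
  unfold model. destruct (Rle_dec x 0) as [Hx0|Hx0].
  { replace x with 0 by lra. rewrite Rmult_0_l, Phi_zero.
    unfold Rdiv. rewrite Rmult_0_l, Rminus_0_r, Rabs_R0. lra. }
  set (s := p * ln y) in *. set (w := p * ln x).
  assert (Hw : w <= 0) by (unfold w; pose proof (ln_nonpos x ltac:(lra)); nra).
  assert (Hratio : Phi p (x * y) / Phi p y = Rpower x p * (M (s + w) / M s)).
  { rewrite !Phi_pos_eq by nra. rewrite ln_mult, <- Rpower_mult_distr by lra.
    unfold s, w. replace (p * (ln x + ln y)) with (p * ln y + p * ln x) by ring.
    pose proof (exp_pos (p * ln y)). pose proof (M_ge1 (p * ln y)). unfold Rpower in *.
    field. lra. }
  rewrite Hratio.
  pose proof (M_ratio_lower j s w Hseg Hw). pose proof (M_ratio_upper j s w Hseg Hw).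
  assert (Hxp : Rpower x p = exp w) by reflexivity.
  rewrite Hxp. pose proof (exp_pos w). pose proof (neg_mul_exp_le1 w).
  rewrite Rabs_left1.
  - assert (exp w * (- w / (INR j + 2)) <= / (INR j + 2)).
    { replace (exp w * (- w / (INR j + 2))) with ((- w * exp w) * / (INR j + 2)) by (unfold Rdiv; ring).
      rewrite <- (Rmult_1_l (/ (INR j + 2))) at 2. apply Rmult_le_compat_r; lra. }
    assert (exp w * (rho (s - knot (S j)) w - M (s + w) / M s) <= exp w * (- w / (INR j + 2)))
      by (apply Rmult_le_compat_l; unfold Rdiv in *; lra).
    lra.
  - assert (0 <= exp w * (rho (s - knot (S j)) w - M (s + w) / M s)) by (apply Rmult_le_pos; lra).
    lra.
Qed.

Lemma Rabs_le_between : forall a b e, Rabs (a - b) <= e -> b - e <= a <= b + e.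
Proof. intros a b e H. unfold Rabs in H. destruct Rcase_abs; lra. Qed.

Lemma power_le_base : forall p t, 1 <= p -> 0 < t <= 1 -> Rpower t p <= t.
Proof.
  intros p t Hp Ht. pose proof (ln_nonpos t Ht).
  unfold Rpower. rewrite <- (exp_ln t) at 2 by lra.
  destruct (Req_dec (p * ln t) (ln t)) as [->|Hne]; [lra|].
  left. apply exp_increasing. nra.
Qed.

Lemma rho_bounds : forall D w, 0 <= D -> w <= 0 -> 0 < rho D w <= 1.
Proof.
  intros D w HD Hw. unfold rho.
  assert (Hinv : 0 < / (1 + D) <= 1).
  { split; [apply Rinv_0_lt_compat; lra|].
    rewrite <- Rinv_1. apply Rinv_le_contravar; lra. }
  assert (w / (1 + D) <= 0) by (unfold Rdiv; nra).
  split; [eapply Rlt_le_trans; [|apply Rmax_l]; lra|apply Rmax_lub; lra].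
Qed.

Lemma rho_lipschitz : forall D u v, 0 <= D -> Rabs (rho D u - rho D v) <= Rabs (u - v).
Proof.
  intros D u v HD.
  assert (Hk : 0 < / (1 + D) <= 1).
  { split; [apply Rinv_0_lt_compat; lra|]. rewrite <- Rinv_1. apply Rinv_le_contravar; lra. }
  assert (Hlin : Rabs ((1 + u / (1 + D)) - (1 + v / (1 + D))) <= Rabs (u - v)).
  { replace ((1 + u / (1 + D)) - (1 + v / (1 + D))) with (/ (1 + D) * (u - v)) by (field; lra).
    rewrite Rabs_mult, Rabs_right by lra. pose proof (Rabs_pos (u - v)). nra. }
  unfold rho. revert Hlin. generalize (1 + u / (1 + D)) (1 + v / (1 + D)). intros a b.
  unfold Rmax. repeat destruct Rle_dec; unfold Rabs; repeat destruct Rcase_abs; lra.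
Qed.

Lemma continuity_pt_of_lipschitz : forall f x,
  (forall u v, Rabs (f u - f v) <= Rabs (u - v)) -> continuity_pt f x.
Proof.
  intros f x Hf eps He. exists eps. split; [lra|].
  intros y [_ Hy]. simpl in *. unfold R_dist in *. eapply Rle_lt_trans; [apply Hf|exact Hy].
Qed.

Lemma cont01_intro : forall H, H 0 = 0 ->
  (forall t, 0 < t <= 1 -> Rabs (H t) <= t) ->
  (forall x, 0 < x <= 1 -> continuity_pt H x) -> cont01 H.
Proof.
  intros H H0 Hdom Hcont x Hx eps He.
  destruct (Req_dec x 0) as [->|Hx0].
  - exists eps. split; [lra|]. intros y Hy Hyx. rewrite H0, Rminus_0_r.
    rewrite Rminus_0_r, Rabs_right in Hyx by lra.
    destruct (Req_dec y 0) as [->|Hy0]; [rewrite H0, Rabs_R0; lra|].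
    pose proof (Hdom y ltac:(lra)). lra.
  - destruct (Hcont x ltac:(lra) eps He) as [alp [Halp Hclose]].
    exists alp. split; [lra|]. intros y _ Hyx.
    destruct (Req_dec y x) as [->|Hne]; [rewrite Rminus_diag, Rabs_R0; lra|].
    apply (Hclose y). split; [split; [exact I|auto]|exact Hyx].
Qed.

Lemma model_pos_eq : forall p D t, 0 < t -> model p D t = Rpower t p * rho D (p * ln t).
Proof. intros p D t Ht. unfold model. destruct (Rle_dec t 0); [lra|reflexivity]. Qed.

Lemma model_bounds : forall p D t, 0 <= p -> 0 <= D -> 0 < t <= 1 ->
  0 <= model p D t <= Rpower t p.
Proof.
  intros p D t Hp HD Ht. rewrite model_pos_eq by lra.
  pose proof (ln_nonpos t Ht). pose proof (exp_pos (p * ln t)).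
  destruct (rho_bounds D (p * ln t) HD ltac:(nra)). unfold Rpower. nra.
Qed.

Lemma model_cont : forall p D, 1 <= p -> 0 <= D -> cont01 (model p D).
Proof.
  intros p D Hp HD. apply cont01_intro.
  - unfold model. destruct (Rle_dec 0 0); [reflexivity|lra].
  - intros t Ht. destruct (model_bounds p D t ltac:(lra) HD Ht).
    pose proof (power_le_base p t Hp Ht). rewrite Rabs_right; lra.
  - intros x Hx.
    apply continuity_pt_locally_ext with (a := x) (f := fun t => Rpower t p * rho D (p * ln t)); [lra| |].
    + intros y Hy. unfold Rdist, Rabs in Hy. destruct Rcase_abs in Hy;
        symmetry; apply model_pos_eq; lra.
    + apply (continuity_pt_mult (fun t => Rpower t p) (fun t => rho D (p * ln t))).
      * apply derivable_continuous_pt. exists (p * Rpower x (p - 1)).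
        apply derivable_pt_lim_power. lra.
      * apply (continuity_pt_comp (fun t => p * ln t) (rho D)).
        -- apply (continuity_pt_scal ln p x), derivable_continuous_pt.
           exists (/ x). apply derivable_pt_lim_ln. lra.
        -- apply continuity_pt_of_lipschitz. intros; now apply rho_lipschitz.
Qed.

Lemma large_index : forall n eps a, 0 < eps ->
  exists j, (n <= j)%nat /\ / (INR j + 2) < eps /\ a < knot (S j).
Proof.
  intros n eps a He. destruct (INR_unbounded (Rmax (/ eps) a)) as [N HN].
  pose proof (Rmax_l (/ eps) a). pose proof (Rmax_r (/ eps) a).
  exists (n + N)%nat. pose proof (le_INR N (n + N) ltac:(lia)).
  split; [lia|split].
  - rewrite <- (Rinv_inv eps). apply Rinv_lt_contravar.
    + apply Rmult_lt_0_compat; [apply Rinv_0_lt_compat|pose proof (pos_INR (n + N))]; lra.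
    + lra.
  - pose proof (knot_ge_index (S (n + N))). rewrite S_INR in *. lra.
Qed.

Lemma model_in_EF : forall p n, 1 < p -> E_F (Phi p) (model p (INR n)).
Proof.
  intros p n Hp A HA. split; [apply model_cont; [lra|apply pos_INR]|].
  intros eps He.
  destruct (large_index n eps (p * ln A) He) as [j [Hnj [Hj Hknot]]].
  set (y := exp ((knot (S j) + INR n) / p)).
  assert (Hlny : p * ln y = knot (S j) + INR n) by (unfold y; rewrite ln_exp; field; lra).
  exists (fun x => Phi p (x * y) / Phi p y). split.
  - exists y. split; [|reflexivity].
    rewrite <- (exp_ln A) by lra. apply exp_increasing.
    apply Rmult_lt_reg_l with p; [lra|]. pose proof (pos_INR n).
    replace (p * ((knot (S j) + INR n) / p)) with (knot (S j) + INR n) by (field; lra). lra.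
  - intros x Hx. rewrite Rabs_minus_sym.
    assert (HD : INR n = p * ln y - knot (S j)) by lra. rewrite HD.
    eapply Rle_trans; [apply dilation_near_model; try lra|left; exact Hj].
    + apply exp_pos.
    + split; [pose proof (pos_INR n); lra|].
      rewrite Hlny. change (knot (S (S j))) with (knot (S j) + INR (S j) + 1).
      apply le_INR in Hnj. rewrite S_INR. lra.
Qed.

(* Uniform approximability on [0, 1] by members of [S] (the closure in
   C[0,1] without the continuity requirement). *)
Definition approx (S : fset) : fset := fun H =>
  forall eps, 0 < eps -> exists g, S g /\
    forall x, 0 <= x <= 1 -> Rabs (H x - g x) <= eps.

Definition models (p : R) : fset := fun H => exists D, 0 <= D /\ H = model p D.

Lemma EF_approx_models : forall p K, 1 < p -> E_F (Phi p) K -> approx (models p) K.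
Proof.
  intros p K Hp HK eps He.
  destruct (large_index 0 (eps / 2) 0 ltac:(lra)) as [J [_ [HJ _]]].
  set (A := exp (knot (S J) / p)).
  destruct (HK A (exp_pos _)) as [_ Happrox].
  destruct (Happrox (eps / 2) ltac:(lra)) as [g [[y [HyA ->]] Hg]].
  assert (Hy : 0 < y) by (pose proof (exp_pos (knot (S J) / p)); unfold A in HyA; lra).
  assert (Hs : knot (S J) <= p * ln y).
  { pose proof (ln_increasing A y (exp_pos _) HyA) as Hln. unfold A in Hln. rewrite ln_exp in Hln.
    apply Rmult_lt_compat_l with (r := p) in Hln; [|lra].
    replace (p * (knot (S J) / p)) with (knot (S J)) in Hln by (field; lra). lra. }
  destruct (segment_beyond J (p * ln y) Hs) as [j [HJj Hseg]].
  exists (model p (p * ln y - knot (S j))). split; [exists (p * ln y - knot (S j)); split; [lra|reflexivity]|].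
  intros x Hx.
  pose proof (dilation_near_model p j y ltac:(lra) Hy Hseg x Hx) as Hnear.
  assert (/ (INR j + 2) <= / (INR J + 2)).
  { apply Rinv_le_contravar; [pose proof (pos_INR J); lra|]. apply le_INR in HJj. lra. }
  pose proof (Hg x Hx).
  replace (K x - model p (p * ln y - knot (S j)) x)
    with ((K x - Phi p (x * y) / Phi p y) + (Phi p (x * y) / Phi p y - model p (p * ln y - knot (S j)) x)) by ring.
  eapply Rle_trans; [apply Rabs_triang|]. lra.
Qed.

Lemma approx_mono : forall (S T : fset) H,
  (forall g, S g -> T g) -> approx S H -> approx T H.
Proof.
  intros S T H HST HH eps He. destruct (HH eps He) as [g [Hg Hclose]]. exists g. auto.
Qed.

Lemma approx_approx : forall (S : fset) H, approx (approx S) H -> approx S H.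
Proof.
  intros S H HH eps He.
  destruct (HH (eps / 2) ltac:(lra)) as [g [Hg Hclose]].
  destruct (Hg (eps / 2) ltac:(lra)) as [g' [Hg' Hclose']].
  exists g'. split; [exact Hg'|]. intros x Hx.
  replace (H x - g' x) with ((H x - g x) + (g x - g' x)) by ring.
  eapply Rle_trans; [apply Rabs_triang|]. pose proof (Hclose x Hx). pose proof (Hclose' x Hx). lra.
Qed.

Lemma conv_hull_mono : forall (S T : fset) H,
  (forall g, S g -> T g) -> conv_hull S H -> conv_hull T H.
Proof.
  intros S T H HST [l [Hl [Hw Hcomb]]]. exists l. split; [|split; assumption].
  eapply Forall_impl; [|exact Hl]. intros c [Hc HSc]. auto.
Qed.

Definition weight (l : list (R * (R -> R))) : R := fold_right (fun c acc => fst c + acc) 0 l.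
Definition combination (l : list (R * (R -> R))) (x : R) : R :=
  fold_right (fun c acc => fst c * snd c x + acc) 0 l.

Lemma approx_combination : forall (S : fset) eps l, 0 < eps ->
  Forall (fun c => 0 <= fst c /\ approx S (snd c)) l ->
  exists l', Forall (fun c => 0 <= fst c /\ S (snd c)) l' /\ weight l' = weight l /\
    forall x, 0 <= x <= 1 -> Rabs (combination l x - combination l' x) <= weight l * eps.
Proof.
  intros S eps l He Hl. induction Hl as [|[a K] l [Ha HK] Hl IH].
  - exists nil. split; [constructor|split; [reflexivity|]].
    intros x _. unfold combination, weight; simpl. rewrite Rminus_0_r, Rabs_R0. lra.
  - destruct IH as [l' [Hl' [Hw Hclose]]]. destruct (HK eps He) as [g [Hg Hgclose]].
    exists ((a, g) :: l'). split; [constructor; auto|split].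
    + unfold weight in *; simpl in *. now rewrite Hw.
    + intros x Hx. unfold combination, weight in *; simpl in *.
      replace (a * K x + fold_right (fun c acc => fst c * snd c x + acc) 0 l -
               (a * g x + fold_right (fun c acc => fst c * snd c x + acc) 0 l'))
        with (a * (K x - g x) + (fold_right (fun c acc => fst c * snd c x + acc) 0 l -
               fold_right (fun c acc => fst c * snd c x + acc) 0 l')) by ring.
      eapply Rle_trans; [apply Rabs_triang|]. rewrite Rabs_mult, Rabs_right by lra.
      pose proof (Hgclose x Hx). pose proof (Hclose x Hx).
      assert (a * Rabs (K x - g x) <= a * eps) by (apply Rmult_le_compat_l; lra). lra.
Qed.

Lemma conv_hull_approx : forall (S : fset) H, conv_hull (approx S) H -> approx (conv_hull S) H.
Proof.
  intros S H [l [Hl [Hw Hcomb]]] eps He.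
  destruct (approx_combination S eps l He Hl) as [l' [Hl' [Hw' Hclose]]].
  exists (combination l'). split.
  - exists l'. split; [exact Hl'|split; [unfold weight in Hw'; congruence|reflexivity]].
  - intros x Hx. rewrite Hcomb. pose proof (Hclose x Hx) as Hc.
    unfold weight in Hc. rewrite Hw, Rmult_1_l in Hc. exact Hc.
Qed.

Lemma CF_approx_conv_models : forall p H, 1 < p ->
  C_F (Phi p) H -> approx (conv_hull (models p)) H.
Proof.
  intros p H Hp [_ HH]. apply approx_approx.
  apply approx_mono with (S := conv_hull (E_F (Phi p))); [|exact HH].
  intros g Hg. apply conv_hull_approx.
  apply conv_hull_mono with (S := E_F (Phi p)); [|exact Hg].
  intros K HK. now apply EF_approx_models.
Qed.

Definition ell (p D t : R) : R := 1 + p * ln t / (1 + D).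

Lemma model_lower_small : forall p D D0 t, 0 <= p -> 0 <= D <= D0 -> 0 < t <= 1 ->
  Rpower t p / (1 + D0) <= model p D t.
Proof.
  intros p D D0 t Hp HD Ht. rewrite model_pos_eq by lra.
  pose proof (exp_pos (p * ln t)). change (exp (p * ln t)) with (Rpower t p) in *.
  assert (/ (1 + D0) <= / (1 + D)) by (apply Rinv_le_contravar; lra).
  assert (/ (1 + D) <= rho D (p * ln t)) by apply Rmax_l.
  unfold Rdiv. apply Rmult_le_compat_l; lra.
Qed.

Lemma model_lower_large : forall p D D0 t, 0 <= p -> 0 <= D0 <= D -> 0 < t <= 1 ->
  Rpower t p * ell p D0 t <= model p D t.
Proof.
  intros p D D0 t Hp HD Ht. rewrite model_pos_eq by lra.
  pose proof (exp_pos (p * ln t)). change (exp (p * ln t)) with (Rpower t p) in *.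
  assert (Hw : p * ln t <= 0) by (pose proof (ln_nonpos t Ht); nra).
  assert (/ (1 + D) <= / (1 + D0)) by (apply Rinv_le_contravar; lra).
  assert (1 + p * ln t / (1 + D) <= rho D (p * ln t)) by apply Rmax_r.
  assert (p * ln t / (1 + D0) <= p * ln t / (1 + D)) by (unfold Rdiv; nra).
  apply Rmult_le_compat_l; unfold ell; lra.
Qed.

Lemma combination_models_split : forall p D0 l, 0 <= p -> 0 <= D0 ->
  Forall (fun c => 0 <= fst c /\ models p (snd c)) l ->
  exists m, 0 <= m <= weight l /\ forall t, 0 < t <= 1 ->
    m * Rpower t p / (1 + D0) <= combination l t /\
    (weight l - m) * (Rpower t p * ell p D0 t) <= combination l t /\
    combination l t <= weight l * Rpower t p.
Proof.
  intros p D0 l Hp HD0 Hl. induction Hl as [|[a K] l [Ha [D [HD HK]]] Hl IH].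
  - exists 0. unfold weight, combination; simpl. split; [lra|]. intros t _. lra.
  - simpl in Ha, HK. subst K.
    destruct IH as [m [Hm Hbounds]]. unfold weight, combination in *; simpl in *.
    destruct (Rle_dec D D0) as [Hsmall|Hlarge].
    + exists (a + m). split; [lra|]. intros t Ht.
      destruct (Hbounds t Ht) as [B1 [B2 B3]].
      pose proof (model_lower_small p D D0 t Hp ltac:(lra) Ht).
      destruct (model_bounds p D t Hp HD Ht).
      assert (a * (Rpower t p / (1 + D0)) <= a * model p D t) by (apply Rmult_le_compat_l; lra).
      assert (a * model p D t <= a * Rpower t p) by (apply Rmult_le_compat_l; lra).
      assert (0 <= a * model p D t) by (apply Rmult_le_pos; lra).
      split; [|split]; unfold Rdiv in *; nra.
    + exists m. split; [lra|]. intros t Ht.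
      destruct (Hbounds t Ht) as [B1 [B2 B3]].
      pose proof (model_lower_large p D D0 t Hp ltac:(lra) Ht).
      destruct (model_bounds p D t Hp HD Ht).
      assert (a * (Rpower t p * ell p D0 t) <= a * model p D t) by (apply Rmult_le_compat_l; lra).
      assert (a * model p D t <= a * Rpower t p) by (apply Rmult_le_compat_l; lra).
      assert (0 <= a * model p D t) by (apply Rmult_le_pos; lra).
      split; [|split]; nra.
Qed.

Lemma conv_models_split : forall p D0 h, 0 <= p -> 0 <= D0 ->
  conv_hull (models p) h ->
  exists m, 0 <= m <= 1 /\ forall t, 0 < t <= 1 ->
    m * Rpower t p / (1 + D0) <= h t /\
    (1 - m) * (Rpower t p * ell p D0 t) <= h t /\ h t <= Rpower t p.
Proof.
  intros p D0 h Hp HD0 [l [Hl [Hw Hh]]].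
  destruct (combination_models_split p D0 l Hp HD0 Hl) as [m [Hm Hbounds]].
  unfold weight, combination in *. rewrite Hw in *.
  exists m. split; [exact Hm|]. intros t Ht. rewrite Hh. rewrite <- (Rmult_1_l (Rpower t p)) at 3.
  apply Hbounds, Ht.
Qed.

Definition heavy_approx (p c : R) (H : R -> R) : Prop :=
  forall eps, 0 < eps -> exists h, conv_hull (models p) h /\
    (forall x, 0 <= x <= 1 -> Rabs (H x - h x) <= eps) /\
    (forall t, 0 < t <= 1 -> c * Rpower t p <= h t).

Lemma lower_of_heavy : forall p c H, heavy_approx p c H ->
  forall t, 0 < t <= 1 -> c * Rpower t p <= H t.
Proof.
  intros p c H HH t Ht. apply Rle_plus_epsilon. intros e He.
  destruct (HH e He) as [h [_ [Hclose Hlow]]].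
  pose proof (Rabs_le_between _ _ _ (Hclose t ltac:(lra))). pose proof (Hlow t Ht). lra.
Qed.

(* If no threshold [D0] admits heavy approximations, then near every [t] most
   of the mass of good approximants sits on parameters above [D0 = -2 p ln t],
   where the models are at least [t^p / 2]. *)
Lemma lower_of_not_heavy : forall p H, 0 < p -> approx (conv_hull (models p)) H ->
  (forall D0, 0 <= D0 -> ~ heavy_approx p (/ (2 * (1 + D0))) H) ->
  forall t, 0 < t <= 1 -> Rpower t p / 4 <= H t.
Proof.
  intros p H Hp Happrox Hnot t Ht.
  set (D0 := - 2 * (p * ln t)).
  assert (Hw : p * ln t <= 0) by (pose proof (ln_nonpos t Ht); nra).
  assert (HD0 : 0 <= D0) by (unfold D0; lra).
  assert (Hell : 1 / 2 <= ell p D0 t).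
  { unfold ell, D0.
    replace (1 + p * ln t / (1 + -2 * (p * ln t))) with ((1 - p * ln t) / (1 - 2 * (p * ln t)))
      by (field; lra).
    apply le_div_iff; lra. }
  pose proof (exp_pos (p * ln t)) as Hpow. change (exp (p * ln t)) with (Rpower t p) in Hpow.
  pose proof (Hnot D0 HD0) as Hnh. unfold heavy_approx in Hnh.
  apply not_all_ex_not in Hnh as [eps0 Hnh]. apply imply_to_and in Hnh as [Heps0 Hnh].
  apply Rle_plus_epsilon. intros e He.
  pose proof (Rmin_l e eps0). pose proof (Rmin_r e eps0).
  set (e' := Rmin e eps0) in *. assert (He' : 0 < e') by (apply Rmin_pos; lra).
  destruct (Happrox e' He') as [h [Hh Hclose]].
  destruct (conv_models_split p D0 h ltac:(lra) HD0 Hh) as [m [Hm Hbounds]].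
  destruct (Rlt_dec m (1 / 2)) as [Hlight|Hheavy].
  - destruct (Hbounds t Ht) as [_ [Hlow _]].
    pose proof (Rabs_le_between _ _ _ (Hclose t ltac:(lra))).
    assert (Rpower t p / 4 <= (1 - m) * (Rpower t p * ell p D0 t)).
    { apply Rle_trans with ((1 - m) * (Rpower t p * (1 / 2))).
      - apply Rle_trans with (1 / 2 * (Rpower t p * (1 / 2))); [lra|].
        apply Rmult_le_compat_r; lra.
      - apply Rmult_le_compat_l; [lra|]. apply Rmult_le_compat_l; lra. }
    lra.
  - exfalso. apply Hnh. exists h. split; [exact Hh|split].
    + intros x Hx. pose proof (Hclose x Hx). lra.
    + intros t' Ht'. destruct (Hbounds t' Ht') as [Hlow _].
      pose proof (exp_pos (p * ln t')) as Hpow'. change (exp (p * ln t')) with (Rpower t' p) in Hpow'.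
      eapply Rle_trans; [|exact Hlow].
      replace (/ (2 * (1 + D0)) * Rpower t' p) with (1 / 2 * Rpower t' p / (1 + D0)) by (field; lra).
      unfold Rdiv. apply Rmult_le_compat_r; [left; apply Rinv_0_lt_compat; lra|].
      apply Rmult_le_compat_r; lra.
Qed.

Lemma conv_models_limit_equiv : forall p H, 0 < p -> approx (conv_hull (models p)) H ->
  exists C, 0 < C /\ forall t, 0 < t <= 1 ->
    / C * Rpower t p <= H t /\ H t <= C * Rpower t p.
Proof.
  intros p H Hp Happrox.
  assert (Hupper : forall t, 0 < t <= 1 -> H t <= Rpower t p).
  { intros t Ht. apply Rle_plus_epsilon. intros e He.
    destruct (Happrox e He) as [h [Hh Hclose]].
    destruct (conv_models_split p 0 h ltac:(lra) ltac:(lra) Hh) as [m [_ Hbounds]].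
    destruct (Hbounds t Ht) as [_ [_ Hup]].
    pose proof (Rabs_le_between _ _ _ (Hclose t ltac:(lra))). lra. }
  assert (Hcomplete : forall C, 1 <= C -> (forall t, 0 < t <= 1 -> / C * Rpower t p <= H t) ->
    exists C, 0 < C /\ forall t, 0 < t <= 1 -> / C * Rpower t p <= H t /\ H t <= C * Rpower t p).
  { intros C HC Hlow. exists C. split; [lra|]. intros t Ht. split; [auto|].
    pose proof (Hupper t Ht). pose proof (exp_pos (p * ln t)). unfold Rpower in *. nra. }
  destruct (classic (exists D0, 0 <= D0 /\ heavy_approx p (/ (2 * (1 + D0))) H))
    as [[D0 [HD0 Hheavy]]|Hnone].
  - apply (Hcomplete (2 * (1 + D0))); [lra|]. intros t Ht.
    apply lower_of_heavy; assumption.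
  - apply (Hcomplete 4); [lra|]. intros t Ht.
    replace (/ 4 * Rpower t p) with (Rpower t p / 4) by (unfold Rdiv; ring).
    apply (lower_of_not_heavy p H Hp Happrox); [|exact Ht].
    intros D0 HD0 Hheavy. apply Hnone. eauto.
Qed.

(* At [t = exp (- D / p)], where the two branches of [rho] meet, the model
   function equals [t^p / (1 + D)]. *)
Lemma model_at_kink : forall p D, 0 < p -> 0 <= D ->
  model p D (exp (- D / p)) = Rpower (exp (- D / p)) p / (1 + D).
Proof.
  intros p D Hp HD. rewrite model_pos_eq by apply exp_pos.
  rewrite ln_exp. replace (p * (- D / p)) with (- D) by (field; lra).
  unfold rho. rewrite Rmax_left; [unfold Rdiv; reflexivity|].
  replace (1 + - D / (1 + D)) with (/ (1 + D)) by (field; lra). lra.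
Qed.

Lemma EF_not_equiv_power : forall p, 1 < p -> ~ fequiv (E_F (Phi p)) (fun t => Rpower t p).
Proof.
  intros p Hp [C [HC HE]].
  destruct (INR_unbounded C) as [n Hn].
  set (t := exp (- INR n / p)).
  assert (Ht : 0 < t <= 1).
  { split; [apply exp_pos|]. rewrite <- exp_0. unfold t.
    destruct (Req_dec (- INR n / p) 0) as [->|Hne]; [lra|].
    left. apply exp_increasing. unfold Rdiv.
    pose proof (pos_INR n). pose proof (Rinv_0_lt_compat p ltac:(lra)). nra. }
  destruct (HE _ (model_in_EF p n Hp) t Ht) as [Hlow _].
  pose proof (model_at_kink p (INR n) ltac:(lra) (pos_INR n)) as Hkink. fold t in Hkink.
  rewrite Hkink in Hlow.
  pose proof (exp_pos (p * ln t)) as Hpow. change (exp (p * ln t)) with (Rpower t p) in Hpow.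
  assert (/ (1 + INR n) < / C) by (apply Rinv_lt_contravar; [nra|lra]).
  unfold Rdiv in Hlow. nra.
Qed.

Theorem mainTheorem2 : forall p : R, 1 < p ->
  exists Phi : R -> R, Orlicz Phi /\
    fcong (C_F Phi) (fun t => Rpower t p) /\
    ~ fequiv (E_F Phi) (fun t => Rpower t p).
Proof.
  intros p Hp. exists (Phi p). split; [apply Phi_orlicz, Hp|split].
  - intros H HH. apply conv_models_limit_equiv; [lra|].
    now apply CF_approx_conv_models.
  - now apply EF_not_equiv_power.
Qed.
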